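(* For every temporal graph with static graph $G=(V,E)$ and lifetime $T_{\max}$ and all $\delta,k$, there is an algorithm (strategy for the Discoverer) that wins the temporal graph discovery game in $|V|\,T_{\max}$ rounds.
   Context: A temporal graph $\mathcal G=(V,E,\lambda)$ with lifetime $T_{\max}$ consists of a finite undirected static graph $(V,E)$ and a labeling $\lambda:E\to\{1,\dots,T_{\max}\}$; edge $e$ is present only at time $\lambda(e)$. Infection model with parameter $\delta\in\mathbb N^+$: a set $S\subseteq V\times[0,T_{\max}]$ of seed infections is given; a seed $(u,t)$ makes $u$ infected at time $t$; otherwise a susceptible node $u$ becomes infected at time $t$ iff some neighbour $v$ infectious at time $t$ has $\lambda(uv)=t$ (exactly one infector recorded if several exist). A node infected at time $t$ is infectious at times $t+1,\dots,t+\delta$ and resistant afterwards. The infection log records triples $(u,v,t)$ ($u$ infected $v$ at time $t$; seeds as $(u,u,t)$). Temporal graph discovery game with parameters $T_{\max},\delta,k$: the Discoverer knows $V$ and $E$; each round it submits at most $k$ seed infections and the Adversary answers with an infection log consistent with the seeds under some labeling consistent with all previous answers (adaptively chosen). The Discoverer wins iff its final submitted labeling matches the Adversary's final labeling consistent with all logs, i.e. effectively iff the labeling is uniquely determined by the logs. *)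

From mathcomp Require Import all_boot.
Set Implicit Arguments. Unset Strict Implicit. Unset Printing Implicit Defensive.

Section TemporalGraph.
Variable V : finType.
Variable E : rel V.        (* static graph; symmetric & irreflexive assumed in theorem *)

(* A labeling: lam u v is the label of edge uv (only values on edges matter). *)
Definition labeling := V -> V -> nat.

Definition valid_labeling (Tmax : nat) (lam : labeling) : Prop :=
  forall u v, E u v -> lam u v = lam v u /\ 1 <= lam u v <= Tmax.

Definition seeds := seq (V * nat).

Definition seeded (S : seeds) (u : V) (t : nat) : bool := (u, t) \in S.

(* Given infection times (None = not yet infected), is v infectious at time t? *)
Definition infectious_at (delta : nat) (f : V -> option nat) (v : V) (t : nat) : bool :=
  if f v is Some s then (s < t) && (t <= s + delta) else false.

(* A node is infected
   at most once (SIR), at the earliest time it is seeded or receives the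
   infection from an infectious neighbour over an edge present at that time. *)
Fixpoint itime (lam : labeling) (delta : nat) (S : seeds) (t : nat) : V -> option nat :=
  match t with
  | 0 => fun u => if seeded S u 0 then Some 0 else None
  | t'.+1 => fun u =>
      match itime lam delta S t' u with
      | Some s => Some s
      | None =>
          if seeded S u t'.+1 ||
             [exists v, [&& E u v, lam u v == t'.+1 &
                            infectious_at delta (itime lam delta S t') v t'.+1]]
          then Some t'.+1 else None
      end
  end.

(* An infection log: for each node, the recorded triple (infector, time) if the
   node got infected (infector = the node itself for seeds), None otherwise.
   This encodes the set of triples (w, u, t). *)
Definition infection_log := V -> option (V * nat).

(* L is a possible log of the process with seeds S under labeling lam
   (lifetime Tmax, parameter delta); when several infectors exist, any one
   of them may be recorded. *)
Definition valid_log (Tmax delta : nat) (lam : labeling) (S : seeds)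
  (L : infection_log) : Prop :=
  forall u,
    match itime lam delta S Tmax u with
    | None => L u = None
    | Some t =>
        if seeded S u t then L u = Some (u, t)
        else exists w, L u = Some (w, t) /\ E u w /\ lam u w = t /\
                       infectious_at delta (itime lam delta S t.-1) w t
    end.

Definition strategy := seq infection_log -> seeds.
Definition guesser := seq infection_log -> labeling.

Definition admissible_seeds (Tmax k : nat) (S : seeds) : Prop :=
  size S <= k /\ forall p, p \in S -> p.2 <= Tmax.

Definition consistent_history (Tmax delta : nat) (st : strategy)
  (lam : labeling) (hs : seq infection_log) : Prop :=
  forall i, i < size hs ->
    valid_log Tmax delta lam (st (take i hs)) (nth (fun _ => None) hs i).

(* The Discoverer (st, g) wins the discovery game in R rounds: every seed set
   it submits is admissible, and for every behaviour of the adaptive adversary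
   (every history of R logs together with a final valid labeling consistent with
   all of them) the guessed labeling coincides with it on every edge. *)
Definition wins_in (Tmax delta k R : nat) (st : strategy) (g : guesser) : Prop :=
  (forall hs, admissible_seeds Tmax k (st hs)) /\
  forall (hs : seq infection_log) (lam : labeling),
    size hs = R ->
    valid_labeling Tmax lam ->
    consistent_history Tmax delta st lam hs ->
    forall u v, E u v -> g hs u v = lam u v.

End TemporalGraph.

(* In round i * Tmax + j the Discoverer seeds only the i-th vertex u at time
   j.  Nothing is infected before time j, so a vertex v != u is infected at
   time j + 1 exactly when uv is an edge with label j + 1 (delta > 0 lets u
   transmit at j + 1).  Sweeping j over [0, Tmax) therefore reveals the label
   of every edge at u, and sweeping u over V uses |V| * Tmax rounds. *)

From mathcomp Require Import all_boot.

Set Implicit Arguments. Unset Strict Implicit. Unset Printing Implicit Defensive.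

Lemma index_iota0 j n : j < n -> index j (iota 0 n) = j.
Proof.
move=> lt_jn; have {1}-> : j = nth 0 (iota 0 n) j by rewrite nth_iota.
by rewrite index_uniq ?iota_uniq ?size_iota.
Qed.

Lemma seeded1 (V : finType) (p : V * nat) x t : seeded [:: p] x t = ((x, t) == p).
Proof. by rewrite /seeded inE. Qed.

Section InfectionTimes.
Variables (V : finType) (E : rel V) (lam : labeling V) (delta : nat).

Lemma itimeS_eq_Some S t a x : a <= t ->
  (itime E lam delta S t.+1 x == Some a) = (itime E lam delta S t x == Some a).
Proof.
move=> le_at /=; case: (itime _ _ _ _ t x) => // ; case: ifP => // _.
by apply/eqP => -[eq_ta]; rewrite -eq_ta ltnn in le_at.
Qed.

Lemma itime_eq_Some S t a x : a <= t ->
  (itime E lam delta S t x == Some a) = (itime E lam delta S a x == Some a).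
Proof.
elim: t => [|t IH]; first by rewrite leqn0 => /eqP ->.
by rewrite leq_eqVlt => /predU1P [-> // | lt_at]; rewrite itimeS_eq_Some // IH.
Qed.

Lemma valid_log_time Tmax S L x : valid_log E Tmax delta lam S L ->
  omap snd (L x) = itime E lam delta S Tmax x.
Proof.
move/(_ x); case: (itime _ _ _ _ Tmax x) => [t|]; last by move->.
by case: ifP => _ => [-> | [w [-> _]]].
Qed.

Section SingleSeed.
Variables (u : V) (s : nat).

Lemma itime_single_seed_upto t x : t <= s ->
  itime E lam delta [:: (u, s)] t x = if (x == u) && (t == s) then Some s else None.
Proof.
elim: t x => [|t IH] x le_ts /=.
  by rewrite seeded1 xpair_eqE; case: (x == u) => //=; case: eqP => // <-.
have lt_ts : t < s := le_ts; have {}IH := IH ^~ (ltnW lt_ts).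
rewrite IH (ltn_eqF lt_ts) andbF seeded1 xpair_eqE.
have no_infector : [exists v, [&& E x v, lam x v == t.+1 &
    infectious_at delta (itime E lam delta [:: (u, s)] t) v t.+1]] = false.
  apply/existsPn => v; rewrite /infectious_at IH.
  by rewrite (ltn_eqF lt_ts) andbF !andbF.
rewrite no_infector orbF.
by case: (x == u); case: eqP => // <-.
Qed.

Lemma itime_single_seed_next x : 0 < delta -> x != u ->
  itime E lam delta [:: (u, s)] s.+1 x =
  if E x u && (lam x u == s.+1) then Some s.+1 else None.
Proof.
move=> delta_gt0 neq_xu /=.
rewrite itime_single_seed_upto // (negbTE neq_xu) seeded1 xpair_eqE (negbTE neq_xu) /=.
congr (if _ then _ else _); apply/existsP/idP => [[v] | /andP [Exu lam_xu]].
  rewrite /infectious_at itime_single_seed_upto // eqxx andbT.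
  by case: (v =P u) => [-> /and3P [-> -> _] | _] //; rewrite !andbF.
exists u; rewrite Exu lam_xu /infectious_at itime_single_seed_upto // !eqxx /=.
by rewrite ltnSn -addn1 leq_add2l.
Qed.

Lemma single_seed_infected_next Tmax x : 0 < delta -> x != u -> s < Tmax ->
  (itime E lam delta [:: (u, s)] Tmax x == Some s.+1) = E x u && (lam x u == s.+1).
Proof.
move=> delta_gt0 neq_xu lt_sT.
by rewrite itime_eq_Some // itime_single_seed_next //; case: ifP; rewrite ?eqxx.
Qed.

End SingleSeed.
End InfectionTimes.

Section Sweep.
Variables (V : finType) (Tmax : nat).

Definition sweep_round (u : V) (j : nat) : nat := index u (enum V) * Tmax + j.

(* For [Tmax = 0] nothing is seeded: [r %% 0 = r] would be a seed time past the lifetime. *)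
Definition sweep_seeds (r : nat) : seeds V :=
  if (Tmax, ohead (drop (r %/ Tmax) (enum V))) is (_.+1, Some u)
  then [:: (u, r %% Tmax)] else [::].

Definition sweep_strategy : strategy V := fun hs => sweep_seeds (size hs).

Definition logged_time (L : infection_log V) (v : V) : option nat := omap snd (L v).

Definition sweep_log (hs : seq (infection_log V)) (u : V) (j : nat) : infection_log V :=
  nth (fun=> None) hs (sweep_round u j).

Definition sweep_guess : guesser V := fun hs u v =>
  (find (fun j => logged_time (sweep_log hs u j) v == Some j.+1) (iota 0 Tmax)).+1.

Lemma sweep_seeds_admissible k r : 0 < k -> admissible_seeds Tmax k (sweep_seeds r).
Proof.
rewrite /sweep_seeds; case: Tmax => [|T] k_gt0; first by [].
case: (ohead _) => [u|] //; split => // p; rewrite inE => /eqP -> /=.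
exact/ltnW/ltn_pmod.
Qed.

Lemma sweep_round_lt u j : j < Tmax -> sweep_round u j < #|V| * Tmax.
Proof.
move=> lt_jT; apply: (@leq_trans (index u (enum V) * Tmax + Tmax)).
  by rewrite ltn_add2l.
by rewrite -mulSnr leq_mul2r cardE index_mem mem_enum orbT.
Qed.

Lemma sweep_seeds_round u j : j < Tmax -> sweep_seeds (sweep_round u j) = [:: (u, j)].
Proof.
rewrite /sweep_seeds /sweep_round; case: Tmax => // T lt_jT.
rewrite divnMDl // divn_small // addn0 modnMDl modn_small //.
by rewrite (drop_nth u) ?index_mem ?mem_enum // nth_index ?mem_enum.
Qed.

Section Correctness.
Variables (E : rel V) (delta : nat) (lam : labeling V) (hs : seq (infection_log V)).
Hypotheses (delta_gt0 : 0 < delta) (size_hs : size hs = #|V| * Tmax).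
Hypothesis hs_consistent : consistent_history E Tmax delta sweep_strategy lam hs.

Lemma sweep_log_reveals_label u v j : v != u -> j < Tmax ->
  (logged_time (sweep_log hs u j) v == Some j.+1) = E v u && (lam v u == j.+1).
Proof.
move=> neq_vu lt_jT; have lt_r : sweep_round u j < size hs.
  by rewrite size_hs sweep_round_lt.
have := hs_consistent lt_r.
rewrite /sweep_strategy (size_takel (ltnW lt_r)) sweep_seeds_round // => /valid_log_time.
by rewrite /logged_time => ->; apply: single_seed_infected_next.
Qed.

Lemma sweep_guess_edge : symmetric E -> irreflexive E -> valid_labeling E Tmax lam ->
  forall u v, E u v -> sweep_guess hs u v = lam u v.
Proof.
move=> E_sym E_irr lam_valid u v Euv.
have [lam_sym /andP [lam_gt0 lam_le]] := lam_valid u v Euv.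
have neq_vu : v != u by apply: contraTneq Euv => ->; rewrite E_irr.
have reveal : {in iota 0 Tmax,
    (fun j => logged_time (sweep_log hs u j) v == Some j.+1) =1 pred1 (lam u v).-1}.
  move=> j; rewrite mem_iota add0n => lt_jT.
  rewrite sweep_log_reveals_label // E_sym Euv -lam_sym /=.
  by rewrite -(prednK lam_gt0) eqSS.
by rewrite /sweep_guess (eq_in_find reveal) -/(index _ _) index_iota0 ?prednK.
Qed.

End Correctness.
End Sweep.

Theorem mainTheorem4 (V : finType) (E : rel V) (Tmax delta k : nat) :
  symmetric E -> irreflexive E -> 0 < delta -> 0 < k ->
  exists (st : strategy V) (g : guesser V),
    wins_in E Tmax delta k (#|V| * Tmax) st g.
Proof.
move=> E_sym E_irr delta_gt0 k_gt0.
exists (sweep_strategy Tmax), (sweep_guess Tmax); split.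
  by move=> hs; apply: sweep_seeds_admissible.
move=> hs lam size_hs lam_valid hs_consistent.
exact: sweep_guess_edge delta_gt0 size_hs hs_consistent E_sym E_irr lam_valid.
Qed.
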